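(* Let $\kappa$ be an uncountable regular cardinal. The following are equivalent: (1) $\diamondsuit_\kappa$ holds; (2) there is a joint diamond sequence of length $\kappa$ for $\kappa$; (3) there is a joint diamond sequence of length $2^\kappa$ for $\kappa$; (4) there exists a $\diamondsuit_\kappa$-tree.
   Context: A filter on $\kappa$ is normal if it is closed under diagonal intersections of $\kappa$-sequences of its members, and uniform if it contains all cobounded subsets of $\kappa$. A $\kappa$-list is a function $d\colon\kappa\to\mathcal{P}(\kappa)$ with $d(\alpha)\subseteq\alpha$ for all $\alpha$. A joint diamond sequence of length $\lambda$ for $\kappa$ is a sequence $\langle d_\alpha;\alpha<\lambda\rangle$ of $\kappa$-lists such that for every sequence $\langle a_\alpha;\alpha<\lambda\rangle$ of subsets of $\kappa$ there is a proper normal uniform filter $\mathcal{F}$ on $\kappa$ with $\{\xi<\kappa : d_\alpha(\xi)=a_\alpha\cap\xi\}\in\mathcal{F}$ for every $\alpha<\lambda$. A $\diamondsuit_\kappa$-tree is a function $D\colon {}^{<\kappa}2\to\mathcal{P}(\kappa)$ such that for every sequence $\langle a_s; s\in{}^\kappa 2\rangle$ of subsets of $\kappa$ there is a proper normal uniform filter on $\kappa$ containing all the sets $S_s=\{\xi<\kappa : D(s\restriction\xi)=a_s\cap\xi\}$, $s\in{}^\kappa2$. *)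

(* The cardinal kappa is represented by an abstract
   type K carrying a strict well-order lt (so elements of K are the ordinals
   xi < kappa, and {eta | lt eta xi} is the ordinal xi). *)
From Stdlib Require Import Wellfounded.

Set Implicit Arguments.

Section Card.
Variable K : Type.
Variable lt : K -> K -> Prop.

Definition injective_fun {A B : Type} (f : A -> B) : Prop :=
  forall x y, f x = f y -> x = y.

Definition strict_well_order : Prop :=
  (forall x, ~ lt x x) /\
  (forall x y z, lt x y -> lt y z -> lt x z) /\
  (forall x y, lt x y \/ x = y \/ lt y x) /\
  well_founded lt.

Definition segment (xi : K) : Type := {eta : K | lt eta xi}.

Definition is_cardinal : Prop :=
  forall xi : K, ~ exists f : K -> segment xi, injective_fun f.

Definition unbounded (X : K -> Prop) : Prop :=
  forall beta, exists xi, lt beta xi /\ X xi.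

Definition is_regular : Prop :=
  forall X : K -> Prop, unbounded X ->
    exists f : K -> {x : K | X x}, injective_fun f.

Definition is_uncountable : Prop :=
  ~ exists f : K -> nat, injective_fun f.

Definition uncountable_regular_cardinal : Prop :=
  strict_well_order /\ is_cardinal /\ is_regular /\ is_uncountable.

Definition closed_set (C : K -> Prop) : Prop :=
  forall xi, (exists beta, lt beta xi) ->
    (forall beta, lt beta xi -> exists gamma, lt beta gamma /\ lt gamma xi /\ C gamma) ->
    C xi.

Definition club (C : K -> Prop) : Prop := closed_set C /\ unbounded C.

Definition stationary (S : K -> Prop) : Prop :=
  forall C, club C -> exists xi, C xi /\ S xi.

Definition guesses_at (d a : K -> Prop) (xi : K) : Prop :=
  forall eta, d eta <-> (a eta /\ lt eta xi).

Definition kappa_list (d : K -> K -> Prop) : Prop :=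
  forall xi eta, d xi eta -> lt eta xi.

Definition diamond : Prop :=
  exists d : K -> K -> Prop, kappa_list d /\
    forall a : K -> Prop, stationary (fun xi => guesses_at (d xi) a xi).

Definition is_filter (F : (K -> Prop) -> Prop) : Prop :=
  F (fun _ => True) /\
  (forall X Y : K -> Prop, (forall x, X x -> Y x) -> F X -> F Y) /\
  (forall X Y : K -> Prop, F X -> F Y -> F (fun x => X x /\ Y x)).

Definition proper_filter (F : (K -> Prop) -> Prop) : Prop :=
  ~ F (fun _ => False).

Definition normal_filter (F : (K -> Prop) -> Prop) : Prop :=
  forall X : K -> K -> Prop, (forall alpha, F (X alpha)) ->
    F (fun xi => forall alpha, lt alpha xi -> X alpha xi).

Definition uniform_filter (F : (K -> Prop) -> Prop) : Prop :=
  forall Y : K -> Prop, (exists beta, forall xi, ~ Y xi -> lt xi beta) -> F Y.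

Definition proper_normal_uniform_filter (F : (K -> Prop) -> Prop) : Prop :=
  is_filter F /\ proper_filter F /\ normal_filter F /\ uniform_filter F.

(* joint diamond sequence of length lambda, the length being the cardinality
   of the index type I *)
Definition joint_diamond_sequence (I : Type) (d : I -> K -> K -> Prop) : Prop :=
  (forall alpha, kappa_list (d alpha)) /\
  forall a : I -> K -> Prop,
    exists F, proper_normal_uniform_filter F /\
      forall alpha, F (fun xi => guesses_at (d alpha xi) (a alpha) xi).

Definition has_joint_diamond (I : Type) : Prop :=
  exists d : I -> K -> K -> Prop, joint_diamond_sequence d.

(* the tree ^{<kappa} 2 : pairs (xi, s) with s : xi -> 2 *)
Definition node : Type := {xi : K & segment xi -> bool}.

Definition restr (s : K -> bool) (xi : K) : node :=
  existT (fun xi => segment xi -> bool) xi (fun eta => s (proj1_sig eta)).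

Definition diamond_tree (D : node -> K -> Prop) : Prop :=
  forall a : (K -> bool) -> K -> Prop,
    exists F, proper_normal_uniform_filter F /\
      forall s : K -> bool, F (fun xi => guesses_at (D (restr s xi)) (a s) xi).

Definition has_diamond_tree : Prop :=
  exists D : node -> K -> Prop, diamond_tree D.

End Card.

(* Given a ◇-sequence d, read each d(ξ) as a ξ-indexed family of pairs (node, guess) of
   subsets of ξ, and let the tree guess at a node s of height ξ the guess paired with s.
   For branches g(γ), γ < κ, and targets a_s, ◇-guess the set coding all pairs
   (g(γ), a_{g(γ)}): at a correct ξ closed under a function separating distinct branches,
   the tree is right at every g(γ) with γ < ξ simultaneously.  Hence every diagonal
   intersection of the sets S_s meets every club, so (with a pairing κ × κ → κ to merge
   κ-sequences) the S_s and the clubs generate a proper normal uniform filter.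
   Conversely a ◇-tree yields joint ◇-sequences along any family of distinct branches,
   κ or 2^κ of them, and one member of a joint ◇-sequence is a ◇-sequence because sets in
   a normal uniform filter are stationary. *)

From Stdlib Require Import Classical ClassicalEpsilon FunctionalExtensionality ProofIrrelevance.
From Stdlib Require Import Bool List Lia.

Definition choose {A : Type} {P : A -> Prop} (H : exists x, P x) : A :=
  proj1_sig (constructive_indefinite_description P H).

Lemma choose_spec {A : Type} {P : A -> Prop} (H : exists x, P x) : P (choose H).
Proof. unfold choose; destruct constructive_indefinite_description; assumption. Qed.

Lemma extend_along_injective {A B X : Type} (i : A -> B) (h : A -> X) (x0 : X) :
  injective_fun i -> exists g : B -> X, forall a, g (i a) = h a.
Proof.
  intro Hi.
  exists (fun b => match excluded_middle_informative (exists a, i a = b) with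
                   | left H => h (choose H)
                   | right _ => x0
                   end).
  intro a. destruct excluded_middle_informative as [H|H].
  - f_equal. apply Hi. exact (choose_spec H).
  - exfalso. apply H. exists a. reflexivity.
Qed.

Definition indicator {A : Type} (a : A) (x : A) : bool :=
  if excluded_middle_informative (x = a) then true else false.

Lemma indicator_inj {A : Type} : injective_fun (@indicator A).
Proof.
  intros a b E. pose proof (f_equal (fun s => s b) E) as Eb. unfold indicator in Eb.
  destruct excluded_middle_informative; destruct excluded_middle_informative; congruence.
Qed.

Section Infinite.
Variable A : Type.
Hypothesis A_not_into_nat : ~ exists f : A -> nat, injective_fun f.

Lemma exists_not_In (l : list A) : exists x, ~ In x l.
Proof.
  apply NNPP; intro Hall. apply A_not_into_nat.
  assert (Hpos : forall x, exists n, nth_error l n = Some x).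
  { intro x. apply In_nth_error. apply NNPP; intro Hx. apply Hall. exists x. exact Hx. }
  exists (fun x => choose (Hpos x)).
  intros x y E. pose proof (choose_spec (Hpos x)) as Hx. pose proof (choose_spec (Hpos y)) as Hy.
  rewrite E in Hx. congruence.
Qed.

Fixpoint fresh_list (m : A) (n : nat) : list A :=
  match n with
  | O => m :: nil
  | S n => choose (exists_not_In (fresh_list m n)) :: fresh_list m n
  end.

Definition fresh_seq (m : A) (n : nat) : A := hd m (fresh_list m n).

Lemma fresh_seq_In m n k : n <= k -> In (fresh_seq m n) (fresh_list m k).
Proof.
  induction 1 as [|k _ IH].
  - destruct n; left; reflexivity.
  - right. exact IH.
Qed.

Lemma fresh_seq_inj m : injective_fun (fresh_seq m).
Proof.
  assert (Hlt : forall a b, a < b -> fresh_seq m a <> fresh_seq m b).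
  { intros a [|b] Hab E; [lia|].
    apply (choose_spec (exists_not_In (fresh_list m b))).
    change (In (fresh_seq m (S b)) (fresh_list m b)). rewrite <- E.
    apply fresh_seq_In. lia. }
  intros a b E. destruct (PeanoNat.Nat.lt_trichotomy a b) as [H|[H|H]].
  - contradiction (Hlt a b H E).
  - exact H.
  - contradiction (Hlt b a H (eq_sym E)).
Qed.

(* Hilbert's hotel: shift the points of an injective sequence starting at [m]. *)
Lemma inject_avoiding (m : A) : exists f : A -> A, injective_fun f /\ forall x, f x <> m.
Proof.
  exists (fun x => match excluded_middle_informative (exists n, fresh_seq m n = x) with
                   | left H => fresh_seq m (S (choose H))
                   | right _ => x
                   end).
  split.
  - intros x y.
    destruct excluded_middle_informative as [Hx|Hx];
      destruct excluded_middle_informative as [Hy|Hy]; intro E.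
    + apply fresh_seq_inj in E. injection E as E.
      rewrite <- (choose_spec Hx), <- (choose_spec Hy), E. reflexivity.
    + contradiction Hy. exists (S (choose Hx)). exact E.
    + contradiction Hx. exists (S (choose Hy)). exact (eq_sym E).
    + exact E.
  - intros x E. destruct excluded_middle_informative as [Hx|Hx].
    + discriminate (fresh_seq_inj m (S (choose Hx)) 0 E).
    + apply Hx. exists 0. exact (eq_sym E).
Qed.

End Infinite.

Section Kappa.
Context {K : Type} {lt : K -> K -> Prop}.
Hypothesis Hkappa : uncountable_regular_cardinal lt.

Local Notation le x y := (~ lt y x).

Lemma lt_irrefl {x} : ~ lt x x.
Proof. destruct Hkappa as [[H _] _]. apply H. Qed.

Lemma lt_trans {x y z} : lt x y -> lt y z -> lt x z.
Proof. destruct Hkappa as [[_ [H _]] _]. apply H. Qed.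

Lemma lt_trichotomy x y : lt x y \/ x = y \/ lt y x.
Proof. destruct Hkappa as [[_ [_ [H _]]] _]. apply H. Qed.

Lemma lt_wf : well_founded lt.
Proof. destruct Hkappa as [[_ [_ [_ H]]] _]. exact H. Qed.

Lemma no_inject_segment xi : ~ exists f : K -> segment lt xi, injective_fun f.
Proof. destruct Hkappa as [_ [H _]]. apply H. Qed.

Lemma regular {X} : unbounded lt X -> exists f : K -> {x : K | X x}, injective_fun f.
Proof. destruct Hkappa as [_ [_ [H _]]]. apply H. Qed.

Lemma K_not_into_nat : ~ exists f : K -> nat, injective_fun f.
Proof. destruct Hkappa as [_ [_ [_ H]]]. exact H. Qed.

Lemma lt_asym {x y} : lt x y -> le x y.
Proof. intros Hxy Hyx. exact (lt_irrefl (lt_trans Hxy Hyx)). Qed.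

Lemma le_lt_trans {x y z} : le x y -> lt y z -> lt x z.
Proof.
  intros Hxy Hyz. destruct (lt_trichotomy x y) as [H|[H|H]].
  - exact (lt_trans H Hyz).
  - subst. exact Hyz.
  - contradiction.
Qed.

Lemma lt_le_trans {x y z} : lt x y -> le y z -> lt x z.
Proof.
  intros Hxy Hyz. destruct (lt_trichotomy y z) as [H|[H|H]].
  - exact (lt_trans Hxy H).
  - subst. exact Hxy.
  - contradiction.
Qed.

Definition kmax (x y : K) : K := if excluded_middle_informative (lt x y) then y else x.

Lemma kmax_cases x y : kmax x y = x \/ kmax x y = y.
Proof. unfold kmax. destruct excluded_middle_informative; auto. Qed.

Lemma le_kmax_l x y : le x (kmax x y).
Proof.
  unfold kmax. destruct excluded_middle_informative as [H|H].
  - exact (lt_asym H).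
  - apply lt_irrefl.
Qed.

Lemma le_kmax_r x y : le y (kmax x y).
Proof. unfold kmax. destruct excluded_middle_informative as [H|H]; [apply lt_irrefl | exact H]. Qed.

Lemma kmax_lt {x y z} : lt (kmax x y) z -> lt x z /\ lt y z.
Proof.
  intro H. split; eapply le_lt_trans; [apply le_kmax_l | exact H | apply le_kmax_r | exact H].
Qed.

Lemma exists_elt : exists x : K, True.
Proof.
  apply NNPP; intro Hempty. apply K_not_into_nat.
  exists (fun _ => 0). intros x. contradiction Hempty. exists x. trivial.
Qed.

Definition k0 : K := choose exists_elt.

(* A maximum [b] would let [K] inject into the segment below [b]. *)
Lemma exists_gt b : exists x, lt b x.
Proof.
  apply NNPP; intro Hmax.
  destruct (inject_avoiding K K_not_into_nat b) as [f [Hf Hfb]].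
  assert (Hseg : forall x, lt (f x) b).
  { intro x. destruct (lt_trichotomy (f x) b) as [H|[H|H]].
    - exact H.
    - contradiction (Hfb x H).
    - contradiction Hmax. exists (f x). exact H. }
  apply (no_inject_segment b). exists (fun x => exist _ (f x) (Hseg x)).
  intros x y E. apply Hf. exact (f_equal (@proj1_sig _ _) E).
Qed.

Definition above (b : K) : K := choose (exists_gt b).

Lemma lt_above b : lt b (above b).
Proof. exact (choose_spec (exists_gt b)). Qed.

Definition k1 : K := above k0.

Lemma k0_neq_k1 : k0 <> k1.
Proof. intro E. apply (lt_irrefl (x := k0)). rewrite E at 2. apply lt_above. Qed.

Lemma bounded_of_small (I : Type) (u : I -> K) :
  ~ (exists h : K -> I, injective_fun h) -> exists b, forall i, lt (u i) b.
Proof.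
  intro Hsmall. apply NNPP; intro Hunbounded.
  assert (Hu : unbounded lt (fun x => exists i, u i = x)).
  { intro beta. apply NNPP; intro H. apply Hunbounded. exists (above beta). intro i.
    apply NNPP; intro Hi. apply H. exists (u i). split.
    - exact (lt_le_trans (lt_above beta) Hi).
    - exists i. reflexivity. }
  destruct (regular Hu) as [h Hh]. apply Hsmall.
  exists (fun x => choose (proj2_sig (h x))).
  intros x y E. apply Hh. apply eq_sig_hprop; [intros; apply proof_irrelevance|].
  rewrite <- (choose_spec (proj2_sig (h x))), <- (choose_spec (proj2_sig (h y))), E.
  reflexivity.
Qed.

Lemma bounded_image (beta : K) (g : K -> K) : exists b, forall x, lt x beta -> lt (g x) b.
Proof.
  destruct (bounded_of_small (segment lt beta) (fun x : segment lt beta => g (proj1_sig x))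
              (no_inject_segment beta))
    as [b Hb].
  exists b. intros x Hx. exact (Hb (exist _ x Hx)).
Qed.

Lemma bounded_image2 (beta : K) (g : K -> K -> K) :
  exists b, forall x y, lt x beta -> lt y beta -> lt (g x y) b.
Proof.
  destruct (bounded_image beta (fun x => choose (bounded_image beta (g x)))) as [b Hb].
  exists b. intros x y Hx Hy.
  exact (lt_trans (choose_spec (bounded_image beta (g x)) y Hy) (Hb x Hx)).
Qed.

Lemma bounded_sequence (u : nat -> K) : exists b, forall n, lt (u n) b.
Proof. exact (bounded_of_small nat u K_not_into_nat). Qed.

Lemma exists_least (P : K -> Prop) : (exists x, P x) -> exists x, P x /\ forall y, P y -> le x y.
Proof.
  intros [x Hx]. induction x as [x IH] using (well_founded_ind lt_wf).
  destruct (classic (exists y, P y /\ lt y x)) as [[y [Hy Hyx]]|Hmin].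
  - exact (IH y Hyx Hy).
  - exists x. split; [exact Hx|]. intros y Hy Hyx. apply Hmin. exists y. split; assumption.
Qed.

Definition closed_under (f : K -> K -> K) (xi : K) : Prop :=
  forall x y, lt x xi -> lt y xi -> lt (f x y) xi.

Lemma closed_under_kmax f g xi :
  closed_under (fun x y => kmax (f x y) (g x y)) xi -> closed_under f xi /\ closed_under g xi.
Proof.
  intro H. split; intros x y Hx Hy; apply (kmax_lt (H x y Hx Hy)).
Qed.

Definition bound2 (beta : K) (f : K -> K -> K) : K := choose (bounded_image2 beta f).

Fixpoint closure_seq (f : K -> K -> K) (b : K) (n : nat) : K :=
  match n with
  | O => b
  | S n => kmax (bound2 (closure_seq f b n) f) (above (closure_seq f b n))
  end.

Lemma club_closure_points (f : K -> K -> K) (beta : K) :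
  club lt (fun xi => lt beta xi /\ closed_under f xi).
Proof.
  split.
  - intros xi [b0 Hb0] Hcofinal. split.
    + destruct (Hcofinal b0 Hb0) as [g [_ [Hg [Hbeta _]]]]. exact (lt_trans Hbeta Hg).
    + intros x y Hx Hy.
      destruct (Hcofinal (kmax x y)) as [g [Hmax [Hg [_ Hclosed]]]].
      { destruct (kmax_cases x y) as [E|E]; rewrite E; assumption. }
      destruct (kmax_lt Hmax) as [Hxg Hyg].
      exact (lt_trans (Hclosed x y Hxg Hyg) Hg).
  - intro b0. set (u := closure_seq f (above (kmax b0 beta))).
    assert (Hstep : forall n, lt (u n) (u (S n))).
    { intro n. exact (lt_le_trans (lt_above _) (le_kmax_r _ _)). }
    assert (Hclosed : forall n x y, lt x (u n) -> lt y (u n) -> lt (f x y) (u (S n))).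
    { intros n x y Hx Hy.
      exact (lt_le_trans (choose_spec (bounded_image2 (u n) f) x y Hx Hy) (le_kmax_l _ _)). }
    destruct (exists_least (fun xi => forall n, lt (u n) xi) (bounded_sequence u))
      as [xi [Hub Hleast]].
    assert (Hbelow : lt (kmax b0 beta) xi) by exact (lt_trans (lt_above _) (Hub 0)).
    exists xi. destruct (kmax_lt Hbelow) as [Hb0 Hbeta]. split; [exact Hb0|split; [exact Hbeta|]].
    intros x y Hx Hy.
    assert (Hmax : lt (kmax x y) xi) by (destruct (kmax_cases x y) as [E|E]; rewrite E; assumption).
    destruct (classic (exists n, le (kmax x y) (u n))) as [[n Hn]|Hnone].
    + destruct (kmax_lt (le_lt_trans Hn (Hstep n))) as [Hxn Hyn].
      exact (lt_trans (Hclosed _ _ _ Hxn Hyn) (Hub (S (S n)))).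
    + exfalso. apply (Hleast (kmax x y)); [|exact Hmax].
      intro n. apply NNPP; intro Hn. apply Hnone. exists n. exact Hn.
Qed.

Lemma uniform_mem_gt (F : (K -> Prop) -> Prop) (b : K) :
  uniform_filter lt F -> F (fun xi => lt b xi).
Proof.
  intro Huniform. apply Huniform. exists (above b). intros xi Hxi.
  exact (le_lt_trans Hxi (lt_above b)).
Qed.

Lemma club_mem (F : (K -> Prop) -> Prop) (C : K -> Prop) :
  is_filter F -> normal_filter lt F -> uniform_filter lt F -> club lt C -> F C.
Proof.
  intros [_ [Hmon Hmeet]] Hnormal Huniform [Hclosed Hunbounded].
  set (next := fun a => choose (Hunbounded a)).
  assert (Hnext : forall a, lt a (next a) /\ C (next a))
    by (intro a; exact (choose_spec (Hunbounded a))).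
  pose proof (Hnormal (fun a xi => lt (next a) xi) (fun a => uniform_mem_gt F (next a) Huniform))
    as Hdiag.
  apply (Hmon _ _) with (2 := Hmeet _ _ Hdiag (uniform_mem_gt F k0 Huniform)).
  intros xi [Hlimit Hk0]. apply Hclosed.
  - exists k0. exact Hk0.
  - intros b Hb. exists (next b). destruct (Hnext b) as [Hbn HCn]. auto.
Qed.

Lemma stationary_of_mem (F : (K -> Prop) -> Prop) (S : K -> Prop) :
  proper_normal_uniform_filter lt F -> F S -> stationary lt S.
Proof.
  intros [Hfilter [Hproper [Hnormal Huniform]]] HS C HC.
  pose proof (club_mem F C Hfilter Hnormal Huniform HC) as HFC.
  destruct Hfilter as [_ [Hmon Hmeet]].
  apply NNPP; intro Hdisjoint. apply Hproper.
  apply (Hmon _ _) with (2 := Hmeet _ _ HFC HS).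
  intros xi [HCxi HSxi]. apply Hdisjoint. exists xi. split; assumption.
Qed.

Lemma diamond_of_joint_diamond (I : Type) (i0 : I) : has_joint_diamond lt I -> diamond lt.
Proof.
  intros [d [Hlist Hjoint]]. exists (d i0). split; [exact (Hlist i0)|].
  intro a. destruct (Hjoint (fun _ => a)) as [F [HF Hguess]].
  exact (stationary_of_mem F _ HF (Hguess i0)).
Qed.

Lemma joint_diamond_of_tree (I : Type) (branch : I -> K -> bool) :
  injective_fun branch -> has_diamond_tree lt -> has_joint_diamond lt I.
Proof.
  intros Hinj [D HD].
  exists (fun i xi eta => D (restr lt (branch i) xi) eta /\ lt eta xi). split.
  - intros i xi eta [_ H]. exact H.
  - intro a. destruct (HD (fun s eta => exists i, branch i = s /\ a i eta)) as [F [HF Hguess]].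
    exists F. split; [exact HF|]. intro i.
    destruct HF as [[_ [Hmon _]] _]. apply (Hmon _ _) with (2 := Hguess (branch i)).
    intros xi Hxi eta. rewrite (Hxi eta). split.
    + intros [[[j [E H]] Hlt] _]. apply Hinj in E. subst j. split; assumption.
    + intros [H Hlt]. repeat split; try exact Hlt. exists i. split; [reflexivity | exact H].
Qed.

Definition godel_lt (q p : K * K) : Prop :=
  lt (kmax (fst q) (snd q)) (kmax (fst p) (snd p)) \/
  (kmax (fst q) (snd q) = kmax (fst p) (snd p) /\
   (lt (fst q) (fst p) \/ (fst q = fst p /\ lt (snd q) (snd p)))).

Lemma godel_lt_wf : well_founded godel_lt.
Proof.
  assert (H : forall m x y, kmax x y = m -> Acc godel_lt (x, y)).
  { intro m. induction m as [m IHm] using (well_founded_ind lt_wf).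
    intro x. induction x as [x IHx] using (well_founded_ind lt_wf).
    intro y. induction y as [y IHy] using (well_founded_ind lt_wf).
    intro Hm. constructor. intros [x' y'] Hlt.
    unfold godel_lt in Hlt; simpl in Hlt. rewrite Hm in Hlt.
    destruct Hlt as [H|[H [H'|[E H']]]].
    - exact (IHm _ H x' y' eq_refl).
    - exact (IHx x' H' y' H).
    - subst x'. exact (IHy y' H' H). }
  intros [x y]. exact (H _ x y eq_refl).
Qed.

Lemma godel_lt_total {p q} : p <> q -> godel_lt p q \/ godel_lt q p.
Proof.
  destruct p as [x y], q as [x' y']. unfold godel_lt; simpl. intro Hne.
  destruct (lt_trichotomy (kmax x y) (kmax x' y')) as [Hm|[Hm|Hm]]; [tauto| |tauto].
  destruct (lt_trichotomy x x') as [Hx|[Hx|Hx]]; [tauto| |right; right; split; [symmetry|]; tauto].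
  subst x'.
  destruct (lt_trichotomy y y') as [Hy|[Hy|Hy]]; [tauto| |right; right; split; [symmetry|]; tauto].
  subst y'. contradiction (Hne eq_refl).
Qed.

Lemma godel_lt_square {q p} : godel_lt q p ->
  le (fst q) (kmax (fst p) (snd p)) /\ le (snd q) (kmax (fst p) (snd p)).
Proof.
  intro Hqp.
  assert (Hq : le (kmax (fst q) (snd q)) (kmax (fst p) (snd p))).
  { destruct Hqp as [H|[E _]]; [exact (lt_asym H) | rewrite E; apply lt_irrefl]. }
  split; intro H; apply Hq; eapply lt_le_trans;
    [exact H | apply le_kmax_l | exact H | apply le_kmax_r].
Qed.

Lemma godel_lt_bounded p (h : forall q, godel_lt q p -> K) :
  exists b, forall q (H : godel_lt q p), lt (h q H) b.
Proof.
  set (h2 := fun x y => match excluded_middle_informative (godel_lt (x, y) p) with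
                        | left H => h (x, y) H
                        | right _ => k0
                        end).
  destruct (bounded_image2 (above (kmax (fst p) (snd p))) h2) as [b Hb].
  exists b. intros [x y] H. destruct (godel_lt_square H) as [Hx Hy].
  specialize (Hb x y (le_lt_trans Hx (lt_above _)) (le_lt_trans Hy (lt_above _))).
  unfold h2 in Hb. destruct excluded_middle_informative as [H'|H']; [|contradiction].
  rewrite (proof_irrelevance _ H H'). exact Hb.
Qed.

Lemma wf_embedding (A : Type) (R : A -> A -> Prop) : well_founded R ->
  (forall p (h : forall q, R q p -> K), exists b, forall q (H : R q p), lt (h q H) b) ->
  exists e : A -> K, forall q p, R q p -> lt (e q) (e p).
Proof.
  intros HR Hbounded.
  set (step := fun p (h : forall q, R q p -> K) => choose (Hbounded p h)).
  assert (Hext : forall p (h h' : forall q, R q p -> K),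
             (forall q H, h q H = h' q H) -> step p h = step p h').
  { intros p h h' Hhh'. replace h' with h; [reflexivity|].
    apply functional_extensionality_dep. intro q.
    apply functional_extensionality_dep. intro H. apply Hhh'. }
  exists (Fix HR (fun _ => K) step).
  intros q p Hqp. rewrite (Fix_eq HR (fun _ => K) step Hext p).
  exact (choose_spec (Hbounded p _) q Hqp).
Qed.

Lemma exists_pairing : exists c : K * K -> K, injective_fun c.
Proof.
  destruct (wf_embedding (K * K) godel_lt godel_lt_wf godel_lt_bounded) as [e He].
  exists e. intros p q E. apply NNPP; intro Hne.
  destruct (godel_lt_total Hne) as [H|H]; apply He in H; rewrite E in H; exact (lt_irrefl H).
Qed.

Section GeneratedFilter.
Variable X : Type.
Variable S : X -> K -> Prop.

Definition basis_point (g : K -> X) (f : K -> K -> K) (xi : K) : Prop :=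
  lt k0 xi /\ closed_under f xi /\ forall gamma, lt gamma xi -> S (g gamma) xi.

Definition generated_filter (Y : K -> Prop) : Prop :=
  exists g f, forall xi, basis_point g f xi -> Y xi.

Lemma generated_filter_mem x : generated_filter (S x).
Proof.
  exists (fun _ => x), (fun a _ => a). intros xi [Hk0 [_ HS]]. exact (HS k0 Hk0).
Qed.

Variable c : K * K -> K.
Hypothesis c_inj : injective_fun c.

(* [g] reads [G a gamma] at [c (a, gamma)] and [f] forces closure under [c]; [lt k1 xi]
   supplies a second index, besides [k0], for binary intersections. *)
Lemma basis_point_diagonal (G : K -> K -> X) (H : K -> K -> K -> K) :
  exists g f, forall xi, basis_point g f xi ->
    lt k1 xi /\ forall a, lt a xi -> basis_point (G a) (H a) xi.
Proof.
  destruct (extend_along_injective c (fun p => G (fst p) (snd p)) (G k0 k0) c_inj) as [g Hg].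
  destruct (extend_along_injective c (fun p => H (fst p) (snd p)) (fun y => y) c_inj) as [h Hh].
  exists g, (fun z y => kmax (kmax (c (z, y)) k1) (h z y)).
  intros xi [Hk0 [Hclosed HS]].
  destruct (closed_under_kmax _ _ _ Hclosed) as [Hck1 Hh_closed].
  destruct (closed_under_kmax (fun z y => c (z, y)) (fun _ _ => k1) _ Hck1) as [Hc Hk1].
  split; [exact (Hk1 k0 k0 Hk0 Hk0)|].
  intros a Ha. split; [exact Hk0|split].
  - intros x y Hx Hy. pose proof (Hh_closed _ y (Hc a x Ha Hx) Hy) as Hxy.
    rewrite (Hh (a, x)) in Hxy. exact Hxy.
  - intros gamma Hgamma. pose proof (HS _ (Hc a gamma Ha Hgamma)) as HSa.
    rewrite (Hg (a, gamma)) in HSa. exact HSa.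
Qed.

Lemma generated_filter_proper_normal_uniform :
  inhabited X -> (forall g f, exists xi, basis_point g f xi) ->
  proper_normal_uniform_filter lt generated_filter.
Proof.
  intros [x0] Hnonempty. split; [split; [|split]|split; [|split]].
  - exists (fun _ => x0), (fun a _ => a). trivial.
  - intros Y Y' HYY' [g [f HY]]. exists g, f. auto.
  - intros Y Y' [g1 [f1 HY]] [g2 [f2 HY']].
    destruct (basis_point_diagonal (fun a => if indicator k0 a then g1 else g2)
                                   (fun a => if indicator k0 a then f1 else f2)) as [g [f Hgf]].
    exists g, f. intros xi Hxi. destruct (Hgf xi Hxi) as [Hk1 Hdiag]. split.
    + apply HY. pose proof (Hdiag k0 (proj1 Hxi)) as Hb. unfold indicator in Hb.
      destruct excluded_middle_informative as [_|Hne]; [exact Hb | contradiction (Hne eq_refl)].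
    + apply HY'. pose proof (Hdiag k1 Hk1) as Hb. unfold indicator in Hb.
      destruct excluded_middle_informative as [E|_];
        [contradiction (k0_neq_k1 (eq_sym E)) | exact Hb].
  - intros [g [f Hfalse]]. destruct (Hnonempty g f) as [xi Hxi]. exact (Hfalse xi Hxi).
  - intros Y HY. destruct (choice _ HY) as [gs Hgs]. destruct (choice _ Hgs) as [fs Hfs].
    destruct (basis_point_diagonal gs fs) as [g [f Hgf]].
    exists g, f. intros xi Hxi a Ha. exact (Hfs a xi (proj2 (Hgf xi Hxi) a Ha)).
  - intros Y [b Hb]. exists (fun _ => x0), (fun _ _ => b). intros xi [Hk0 [Hclosed _]].
    apply NNPP; intro HY. exact (lt_irrefl (lt_trans (Hb xi HY) (Hclosed k0 k0 Hk0 Hk0))).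
Qed.

End GeneratedFilter.

Definition branch_guessed (D : node lt -> K -> Prop) (a : (K -> bool) -> K -> Prop)
    (s : K -> bool) (xi : K) : Prop :=
  guesses_at lt (D (restr lt s xi)) (a s) xi.

Section DiamondTree.
Variable c : K * K -> K.
Hypothesis c_inj : injective_fun c.

Definition code (gamma eta : K) (b : bool) : K := c (gamma, c (eta, if b then k1 else k0)).

Lemma code_inj gamma eta b gamma' eta' b' :
  code gamma eta b = code gamma' eta' b' -> gamma = gamma' /\ eta = eta' /\ b = b'.
Proof.
  intro E. apply c_inj in E. injection E as Egamma E. apply c_inj in E. injection E as Eeta Eb.
  split; [exact Egamma | split; [exact Eeta|]].
  destruct b, b'; try reflexivity;
    [contradiction (k0_neq_k1 (eq_sym Eb)) | contradiction (k0_neq_k1 Eb)].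
Qed.

(* [d xi] codes, for each [gamma < xi], a node (tag [true]) and a guess (tag [false]). *)
Definition tree_of_list (d : K -> K -> Prop) (t : node lt) : K -> Prop :=
  let (xi, s) := t in
  fun eta => lt eta xi /\ exists gamma, lt gamma xi /\
    (forall e (He : lt e xi), s (exist _ e He) = true <-> d xi (code gamma e true)) /\
    d xi (code gamma eta false).

Definition coded_pairs (a : (K -> bool) -> K -> Prop) (g : K -> K -> bool) (z : K) : Prop :=
  exists gamma eta b, z = code gamma eta b /\
    (if b then g gamma eta = true else a (g gamma) eta).

Lemma coded_pairs_code a g gamma eta b :
  coded_pairs a g (code gamma eta b) <-> (if b then g gamma eta = true else a (g gamma) eta).
Proof.
  split.
  - intros [gamma' [eta' [b' [E H]]]].
    destruct (code_inj _ _ _ _ _ _ E) as [-> [-> ->]]. exact H.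
  - intro H. exists gamma, eta, b. split; [reflexivity | exact H].
Qed.

Lemma tree_of_list_guesses (d : K -> K -> Prop) (a : (K -> bool) -> K -> Prop)
    (g : K -> K -> bool) (xi : K) :
  (forall gamma eta b, lt gamma xi -> lt eta xi ->
     (d xi (code gamma eta b) <-> if b then g gamma eta = true else a (g gamma) eta)) ->
  (forall gamma gamma', lt gamma xi -> lt gamma' xi -> g gamma <> g gamma' ->
     exists e, lt e xi /\ g gamma e <> g gamma' e) ->
  forall gamma, lt gamma xi ->
    branch_guessed (tree_of_list d) a (g gamma) xi.
Proof.
  intros Hd Hseparate gamma Hgamma eta. simpl. split.
  - intros [Heta [gamma' [Hgamma' [Hnode Hguess]]]]. split; [|exact Heta].
    apply (Hd gamma' eta false Hgamma' Heta) in Hguess.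
    replace (g gamma) with (g gamma'); [exact Hguess|].
    apply NNPP; intro Hne. destruct (Hseparate _ _ Hgamma' Hgamma Hne) as [e [He Hdiff]].
    apply Hdiff. apply eq_iff_eq_true.
    rewrite (Hnode e He). symmetry. exact (Hd gamma' e true Hgamma' He).
  - intros [Ha Heta]. split; [exact Heta|]. exists gamma. split; [exact Hgamma|]. split.
    + intros e He. symmetry. exact (Hd gamma e true Hgamma He).
    + apply (Hd gamma eta false Hgamma Heta). exact Ha.
Qed.

Lemma exists_separator (g : K -> K -> bool) :
  exists delta : K -> K -> K, forall x y, g x <> g y -> g x (delta x y) <> g y (delta x y).
Proof.
  assert (Hsep : forall p : K * K, exists e, g (fst p) <> g (snd p) -> g (fst p) e <> g (snd p) e).
  { intros [x y]. destruct (classic (exists e, g x e <> g y e)) as [[e He]|Hnone].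
    - exists e. intros _. exact He.
    - exists k0. intro Hne. contradiction Hne.
      apply functional_extensionality. intro e.
      apply NNPP; intro He. apply Hnone. exists e. exact He. }
  destruct (choice _ Hsep) as [delta Hdelta].
  exists (fun x y => delta (x, y)). intros x y. exact (Hdelta (x, y)).
Qed.

Lemma diamond_basis_point_exists (d : K -> K -> Prop) (a : (K -> bool) -> K -> Prop) :
  (forall A : K -> Prop, stationary lt (fun xi => guesses_at lt (d xi) A xi)) ->
  forall g f, exists xi,
    basis_point (K -> bool) (branch_guessed (tree_of_list d) a) g f xi.
Proof.
  intros Hdiamond g f. destruct (exists_separator g) as [delta Hdelta].
  destruct (Hdiamond (coded_pairs a g) _
              (club_closure_points
                 (fun x y => kmax (kmax (f x y) (delta x y)) (kmax (c (x, y)) k1)) k0))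
    as [xi [[Hk0 Hclosed] Hguess]].
  destruct (closed_under_kmax (fun x y => kmax (f x y) (delta x y))
              (fun x y => kmax (c (x, y)) k1) _ Hclosed) as [Hfdelta Hck1].
  destruct (closed_under_kmax _ _ _ Hfdelta) as [Hf Hdelta_closed].
  destruct (closed_under_kmax (fun x y => c (x, y)) (fun _ _ => k1) _ Hck1) as [Hc Hk1].
  assert (Hcode : forall gamma eta b, lt gamma xi -> lt eta xi -> lt (code gamma eta b) xi).
  { intros gamma eta b Hgamma Heta. apply (Hc _ _ Hgamma), Hc; [exact Heta|].
    destruct b; [exact (Hk1 k0 k0 Hk0 Hk0) | exact Hk0]. }
  exists xi. split; [exact Hk0 | split; [exact Hf|]].
  apply tree_of_list_guesses.
  - intros gamma eta b Hgamma Heta. rewrite (Hguess _), coded_pairs_code.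
    split; [tauto | intro H; split; [exact H | exact (Hcode _ _ _ Hgamma Heta)]].
  - intros x y Hx Hy Hne. exists (delta x y).
    split; [exact (Hdelta_closed x y Hx Hy) | exact (Hdelta x y Hne)].
Qed.

End DiamondTree.

Lemma diamond_tree_of_diamond : diamond lt -> has_diamond_tree lt.
Proof.
  intros [d [_ Hdiamond]]. destruct exists_pairing as [c Hc].
  exists (tree_of_list c d). intro a.
  exists (generated_filter (K -> bool) (branch_guessed (tree_of_list c d) a)).
  split.
  - apply (generated_filter_proper_normal_uniform _ _ c Hc).
    + exact (inhabits (fun _ => true)).
    + exact (diamond_basis_point_exists c Hc d a Hdiamond).
  - apply generated_filter_mem.
Qed.

Lemma diamond_iff_diamond_tree : diamond lt <-> has_diamond_tree lt.
Proof.
  split; [exact diamond_tree_of_diamond|].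
  intro Htree. apply (diamond_of_joint_diamond (K -> bool) (fun _ => true)).
  exact (joint_diamond_of_tree (K -> bool) (fun s => s) (fun _ _ E => E) Htree).
Qed.

Lemma diamond_iff_joint_diamond (I : Type) (i0 : I) (branch : I -> K -> bool) :
  injective_fun branch -> (diamond lt <-> has_joint_diamond lt I).
Proof.
  intro Hbranch. split.
  - intro Hdiamond.
    exact (joint_diamond_of_tree I branch Hbranch (diamond_tree_of_diamond Hdiamond)).
  - exact (diamond_of_joint_diamond I i0).
Qed.

End Kappa.

Theorem theorem5p8 (K : Type) (lt : K -> K -> Prop)
  (Hkappa : uncountable_regular_cardinal lt) :
  (diamond lt <-> has_joint_diamond lt K) /\
  (diamond lt <-> has_joint_diamond lt (K -> bool)) /\
  (diamond lt <-> has_diamond_tree lt).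
Proof.
  split; [|split].
  - exact (diamond_iff_joint_diamond Hkappa K (k0 Hkappa) indicator indicator_inj).
  - exact (diamond_iff_joint_diamond Hkappa (K -> bool) (fun _ => true) (fun s => s)
             (fun _ _ E => E)).
  - exact (diamond_iff_diamond_tree Hkappa).
Qed.
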